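(* Let $\mathsf P$ be a rider piece having three distinct basic moves $m_1=(c_1,d_1)$, $m_2=(c_2,d_2)$, $m_3=(c_3,d_3)$, and let $q=3$ on the square board $[0,1]^2$. Let $w_1,w_2,w_3$ be nonzero integers with $\gcd(w_1,w_2,w_3)=1$ and $w_1m_1+w_2m_2+w_3m_3=(0,0)$. Consider a triangular configuration $\mathbf z=(z_1,z_2,z_3)$ of three pieces (a nondegenerate triangle with vertices in $[0,1]^2$) in which the pieces attack pairwise along the three distinct move directions $m_1,m_2,m_3$ (i.e. $\mathbf z$ lies in three move hyperplanes, one for each pair of pieces, using the three different moves), together with three fixations that fix its position in the square (i.e. these three move equations and three fixations have $\mathbf z$ as their unique common solution). Then $\mathbf z$ is a vertex of the inside-out polytope $([0,1]^6,\mathcal A_{\mathsf P})$ and its denominator is $$\Delta(\mathbf z)=\max(|w_1c_1|,|w_1d_1|,|w_2c_2|,|w_2d_2|,|w_3c_3|,|w_3d_3|).$$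
   Context: A rider piece has a finite set of basic moves: nonzero integer vectors $(c,d)$ with $\gcd(c,d)=1$, no two parallel (so $w_1,w_2,w_3$ exist and are unique up to simultaneous negation). For $3$ pieces, configurations are points $(z_1,z_2,z_3)\in\mathbb R^6$, $z_i=(x_i,y_i)$; the move hyperplane for move $(c,d)$ and pieces $i,j$ is $\mathcal H^{d/c}_{ij}=\{(z_j-z_i)\cdot(d,-c)=0\}$, and $\mathcal A_{\mathsf P}$ is the set of all these. A fixation is one of the equations $x_i=0$, $y_i=0$, $x_i=1$, $y_i=1$. A vertex of $([0,1]^6,\mathcal A_{\mathsf P})$ is a point of $[0,1]^6$ that is the unique common solution of some move equations and fixations. $\Delta(\mathbf z)$ is the least common denominator of the coordinates of $\mathbf z$. *)

From HB Require Import structures.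
From mathcomp Require Import all_boot all_order all_algebra.
From mathcomp Require Import reals.
Set Implicit Arguments. Unset Strict Implicit. Unset Printing Implicit Defensive.
Import Order.TTheory GRing.Theory Num.Theory.
Local Open Scope ring_scope.

Definition move := (int * int)%type.

Definition rider (P : seq move) : Prop :=
  uniq P /\
  (forall m, m \in P -> m != (0, 0) /\ gcdz m.1 m.2 = 1) /\
  (forall m m', m \in P -> m' \in P -> m != m' -> m.1 * m'.2 - m'.1 * m.2 != 0).

Definition config (R : realType) := 'I_3 -> (R * R)%type.

Definition on_move_hyp (R : realType) (m : move) (i j : 'I_3) (z : config R) : Prop :=
  ((z j).1 - (z i).1) * (m.2)%:~R - ((z j).2 - (z i).2) * (m.1)%:~R = 0.

Definition move_eq := (move * 'I_3 * 'I_3)%type.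
Definition me_move (e : move_eq) : move := e.1.1.
Definition me_i (e : move_eq) : 'I_3 := e.1.2.
Definition me_j (e : move_eq) : 'I_3 := e.2.

(* A fixation: x_i = 0, y_i = 0, x_i = 1 or y_i = 1.
   fx_isx = true means the x-coordinate; fx_one = true means the value 1. *)
Definition fixation := ('I_3 * bool * bool)%type.
Definition fx_piece (f : fixation) : 'I_3 := f.1.1.
Definition fx_isx (f : fixation) : bool := f.1.2.
Definition fx_one (f : fixation) : bool := f.2.

Definition sat_fix (R : realType) (f : fixation) (z : config R) : Prop :=
  (if fx_isx f then (z (fx_piece f)).1 else (z (fx_piece f)).2)
  = (if fx_one f then 1 else 0).

Definition sat_move_eq (R : realType) (e : move_eq) (z : config R) : Prop :=
  on_move_hyp (me_move e) (me_i e) (me_j e) z.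

Definition in_unit_cube (R : realType) (z : config R) : Prop :=
  forall i, (0 <= (z i).1 <= 1) /\ (0 <= (z i).2 <= 1).

(* z is a vertex of ([0,1]^6, A_P): a point of [0,1]^6 that is the unique
   common solution of some move equations (of P) and fixations. *)
Definition is_vertex (R : realType) (P : seq move) (z : config R) : Prop :=
  in_unit_cube z /\
  exists (E : seq move_eq) (F : seq fixation),
    (forall e, e \in E -> me_move e \in P /\ me_i e != me_j e) /\
    (forall z' : config R,
        ((forall e, e \in E -> sat_move_eq e z') /\
         (forall f, f \in F -> sat_fix f z'))
        <-> (forall i, z' i = z i)).

Definition clears_denoms (R : realType) (z : config R) (N : nat) : Prop :=
  forall i, (N%:R * (z i).1 \is a Num.int) /\ (N%:R * (z i).2 \is a Num.int).

Definition is_lcd (R : realType) (z : config R) (N : nat) : Prop :=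
  (0 < N)%N /\ clears_denoms z N /\
  (forall M : nat, (0 < M)%N -> clears_denoms z M -> (N <= M)%N).

Definition triangle_nondeg (R : realType) (z : config R) : Prop :=
  ((z 1).1 - (z 0).1) * ((z 2).2 - (z 0).2)
  - ((z 2).1 - (z 0).1) * ((z 1).2 - (z 0).2) != 0.

From mathcomp Require Import all_boot all_order all_algebra.
From mathcomp Require Import reals.
From mathcomp Require Import ring lra.
Set Implicit Arguments. Unset Strict Implicit. Unset Printing Implicit Defensive.
Import Order.TTheory GRing.Theory Num.Theory.
Local Open Scope ring_scope.

(* Orient the three edges of the triangle along the cycle 0 -> 1 -> 2 -> 0 and write
   the k-th edge vector as t_k m_k.  The oriented edges sum to zero, and since two of
   the moves are independent, the relations among m_1, m_2, m_3 form the line spanned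
   by w; hence every edge vector is lam w_k m_k for one scalar lam.  Uniqueness of the
   solution forces fixations x_i = 1 and x_j = 0 on a common axis (otherwise a
   homothety would move the triangle), so some coordinate of some lam w_k m_k is +-1,
   while all of them lie in [-1, 1]: |lam| = 1/N.  Then N clears all denominators, and
   any M that does makes M/N an integer, because the gcd conditions give Bezout
   combinations of the coordinates of the w_k m_k equal to 1. *)

Definition coord {T : Type} (bx : bool) (p : T * T) : T := if bx then p.1 else p.2.

Lemma ord3P (k : 'I_3) : [\/ k = 0, k = 1 | k = 2].
Proof.
by case: k => [[|[|[|//]]] ?]; [constructor 1 | constructor 2 | constructor 3]; apply: val_inj.
Qed.

Lemma sum_ord3 (V : nmodType) (F : 'I_3 -> V) : \sum_k F k = F 0 + F 1 + F 2.
Proof.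
rewrite !big_ord_recl big_ord0 addr0 addrA.
have -> : lift ord0 ord0 = 1 :> 'I_3 by apply: val_inj.
by have -> : lift ord0 (lift ord0 ord0) = 2 :> 'I_3 by apply: val_inj.
Qed.

Lemma ordS3_adj (i j : 'I_3) : i != j -> j = ordS i \/ i = ordS j.
Proof.
case: (ord3P i) => ->; case: (ord3P j) => ->; rewrite ?eqxx // => _.
all: by [left; apply: val_inj | right; apply: val_inj].
Qed.

Lemma sum_cycle_edges (V : zmodType) n (tail : 'I_n -> 'I_n) (f : 'I_n -> V) :
  injective tail -> \sum_k (f (ordS (tail k)) - f (tail k)) = 0.
Proof.
move=> tail_inj.
transitivity (\sum_i (f (ordS i) - f i)); first by rewrite [RHS](reindex_inj tail_inj).
by rewrite sumrB [X in _ - X](reindex_inj (@ordS_inj n)) subrr.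
Qed.

Lemma cramer2 (R : idomainType) (c1 c2 d1 d2 u1 u2 : R) :
  c1 * d2 - c2 * d1 != 0 -> u1 * c1 + u2 * c2 = 0 -> u1 * d1 + u2 * d2 = 0 ->
  u1 = 0 /\ u2 = 0.
Proof.
move=> det_neq0 hc hd.
have u1_det : u1 * (c1 * d2 - c2 * d1) = d2 * (u1 * c1 + u2 * c2) - c2 * (u1 * d1 + u2 * d2).
  by ring.
have u2_det : u2 * (c1 * d2 - c2 * d1) = c1 * (u1 * d1 + u2 * d2) - d1 * (u1 * c1 + u2 * c2).
  by ring.
rewrite hc hd !mulr0 subr0 in u1_det u2_det.
by split; apply/eqP; rewrite -(mulIr_eq0 _ (mulIf det_neq0)) ?u1_det ?u2_det.
Qed.

Lemma relations_proportional (F : fieldType) (c d v w : 'I_3 -> F) :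
  w 0 != 0 -> c 1 * d 2 - c 2 * d 1 != 0 ->
  \sum_k v k * c k = 0 -> \sum_k v k * d k = 0 ->
  \sum_k w k * c k = 0 -> \sum_k w k * d k = 0 ->
  exists lam, forall k, v k = lam * w k.
Proof.
move=> w0_neq0 det_neq0 vc vd wc wd.
pose lam := v 0 / w 0; pose u k := v k - lam * w k.
have u0 : u 0 = 0 by rewrite /u /lam divfK ?subrr.
have u_rel (e : 'I_3 -> F) : \sum_k v k * e k = 0 -> \sum_k w k * e k = 0 ->
    u 1 * e 1 + u 2 * e 2 = 0.
  move=> ve we.
  have : \sum_k u k * e k = \sum_k v k * e k - lam * \sum_k w k * e k.
    by rewrite mulr_sumr -sumrB; apply: eq_bigr => k _; rewrite /u; ring.
  by rewrite ve we mulr0 subr0 sum_ord3 u0 mul0r add0r.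
have [u1 u2] := cramer2 det_neq0 (u_rel c vc wc) (u_rel d vd wd).
exists lam => k; apply/eqP; rewrite -subr_eq0; apply/eqP.
by case: (ord3P k) => ->; [exact: u0 | exact: u1 | exact: u2].
Qed.

Lemma orthogonal_int_multiple (F : numFieldType) (x y : F) (c d : int) :
  (c, d) != (0, 0) -> x * d%:~R - y * c%:~R = 0 -> exists t, x = t * c%:~R /\ y = t * d%:~R.
Proof.
move=> cd_neq0 /eqP; rewrite subr_eq0 => /eqP xd_yc.
have [c0 | c_neq0] := eqVneq c 0.
- have d_neq0 : (d%:~R : F) != 0 by rewrite intr_eq0; apply: contraNneq cd_neq0 => ->; rewrite c0.
  move: xd_yc; rewrite c0 mulr0 => /eqP; rewrite mulf_eq0 (negbTE d_neq0) orbF => /eqP ->.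
  by exists (y / d%:~R); rewrite mulr0 divfK.
- have c_neq0' : (c%:~R : F) != 0 by rewrite intr_eq0.
  exists (x / c%:~R); split; first by rewrite divfK.
  by apply: (mulIf c_neq0'); rewrite -xd_yc; field.
Qed.

Lemma int_mul_gcdz (R : archiNumDomainType) (q : R) (u v : int) :
  q * u%:~R \is a Num.int -> q * v%:~R \is a Num.int -> q * (gcdz u v)%:~R \is a Num.int.
Proof.
move=> qu qv; have [s [t <-]] := Bezoutz u v.
rewrite intrD !intrM mulrDr (mulrCA q s%:~R) (mulrCA q t%:~R).
by apply: rpredD; apply: rpredM; rewrite ?intr_int.
Qed.

Lemma int_of_primitive (R : archiNumDomainType) (m : 'I_3 -> move) (w : 'I_3 -> int) (q : R) :
  (forall k, gcdz (m k).1 (m k).2 = 1) -> gcdz (gcdz (w 0) (w 1)) (w 2) = 1 ->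
  (forall k bx, q * (w k * coord bx (m k))%:~R \is a Num.int) -> q \is a Num.int.
Proof.
move=> m_prim w_prim qwm.
have qw k : q * (w k)%:~R \is a Num.int.
  have := int_mul_gcdz (q := q * (w k)%:~R) (u := (m k).1) (v := (m k).2).
  by rewrite m_prim mulr1 -!mulrA -!intrM; apply; [exact: qwm k true | exact: qwm k false].
have := int_mul_gcdz (int_mul_gcdz (qw 0) (qw 1)) (qw 2).
by rewrite w_prim mulr1.
Qed.

Lemma on_move_hyp_sym (R : realType) mv i j (z : config R) :
  on_move_hyp mv i j z -> on_move_hyp mv j i z.
Proof. by rewrite /on_move_hyp => h; rewrite -[RHS]oppr0 -h; ring. Qed.

Lemma on_move_hyp_multiple (R : realType) mv i j (z : config R) :
  mv != (0, 0) -> on_move_hyp mv i j z ->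
  exists t, forall bx, coord bx (z j) - coord bx (z i) = t * (coord bx mv)%:~R.
Proof.
case: mv => c d cd_neq0 /(orthogonal_int_multiple cd_neq0) [t [tx ty]].
by exists t; case.
Qed.

Lemma cycle_edges_proportional (R : realType) (m : 'I_3 -> move) (w : 'I_3 -> int)
    (tail : 'I_3 -> 'I_3) (z : config R) :
  injective tail -> (forall k, m k != (0, 0)) ->
  (m 1).1 * (m 2).2 - (m 2).1 * (m 1).2 != 0 -> w 0 != 0 ->
  (forall bx, \sum_k w k * coord bx (m k) = 0) ->
  (forall k, on_move_hyp (m k) (tail k) (ordS (tail k)) z) ->
  exists lam, forall k bx,
    coord bx (z (ordS (tail k))) - coord bx (z (tail k)) = lam * (w k * coord bx (m k))%:~R.
Proof.
move=> tail_inj m_neq0 m12_indep w0_neq0 w_rel on_edges.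
have [t edge_t] := fin_all_exists (fun k => on_move_hyp_multiple (m_neq0 k) (on_edges k)).
have t_rel bx : \sum_k t k * (coord bx (m k))%:~R = 0.
  rewrite -[RHS](sum_cycle_edges (fun i => coord bx (z i)) tail_inj).
  by apply: eq_bigr => k _; rewrite edge_t.
have w_relR bx : \sum_k (w k)%:~R * (coord bx (m k))%:~R = 0 :> R.
  rewrite -[RHS](rmorph0 (intr : int -> R)) -(w_rel bx) rmorph_sum.
  by apply: eq_bigr => k _; rewrite rmorphM.
have w0_neq0R : (w 0)%:~R != 0 :> R by rewrite intr_eq0.
have m12_indepR : (coord true (m 1))%:~R * (coord false (m 2))%:~R
    - (coord true (m 2))%:~R * (coord false (m 1))%:~R != 0 :> R.
  by rewrite -!intrM -intrB intr_eq0.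
have [lam t_lam] := relations_proportional w0_neq0R m12_indepR
  (t_rel true) (t_rel false) (w_relR true) (w_relR false).
by exists lam => k bx; rewrite edge_t t_lam intrM mulrA.
Qed.

Definition affine_image (R : realType) (s : R) (p : R * R) (z : config R) : config R :=
  fun i => (s * (z i).1 + p.1, s * (z i).2 + p.2).

Lemma on_move_hyp_affine (R : realType) mv i j (z : config R) s p :
  on_move_hyp mv i j z -> on_move_hyp mv i j (affine_image s p z).
Proof. by rewrite /on_move_hyp /= => h; rewrite -[RHS](mulr0 s) -h; ring. Qed.

Section EdgeOrientation.

Variables (a b : 'I_3 -> 'I_3).
Hypothesis ab_neq : forall k, a k != b k.
Hypothesis edges_distinct : forall k l, k != l -> [set a k; b k] != [set a l; b l].

Definition edge_tail k := if b k == ordS (a k) then a k else b k.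

Lemma edge_tailE k : [set a k; b k] = [set edge_tail k; ordS (edge_tail k)].
Proof.
rewrite /edge_tail; case: eqP => [-> // | /eqP b_neq].
have [/eqP | ->] := ordS3_adj (ab_neq k); first by rewrite (negbTE b_neq).
by rewrite setUC.
Qed.

Lemma edge_tail_inj : injective edge_tail.
Proof.
move=> k l tail_kl; case: (eqVneq k l) => // /edges_distinct.
by rewrite !edge_tailE tail_kl eqxx.
Qed.

Lemma on_move_hyp_tail (R : realType) mv (z : config R) k :
  on_move_hyp mv (a k) (b k) z -> on_move_hyp mv (edge_tail k) (ordS (edge_tail k)) z.
Proof.
rewrite /edge_tail; case: eqP => [<- // | /eqP b_neq h].
have [/eqP | <-] := ordS3_adj (ab_neq k); first by rewrite (negbTE b_neq).
exact: on_move_hyp_sym.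
Qed.

End EdgeOrientation.

Section Fixations.

Variables (R : realType) (m : 'I_3 -> move) (a b : 'I_3 -> 'I_3).
Variables (fx : 'I_3 -> fixation) (z : config R).
Hypothesis on_moves : forall k, on_move_hyp (m k) (a k) (b k) z.
Hypothesis fixed : forall k, sat_fix (fx k) z.
Hypothesis unique : forall z' : config R,
  (forall k, on_move_hyp (m k) (a k) (b k) z') -> (forall k, sat_fix (fx k) z') ->
  forall i, z' i = z i.

Lemma affine_image_fixed s p :
  (forall k, sat_fix (fx k) (affine_image s p z)) -> forall i, affine_image s p z i = z i.
Proof. by apply: unique => k; apply: on_move_hyp_affine. Qed.

Lemma coord_anchor bx : exists i, coord bx (z i) \is a Num.int.
Proof.
have [k /eqP <- | no_fix] := pickP (fun k => fx_isx (fx k) == bx).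
  exists (fx_piece (fx k)); have := fixed k; rewrite /sat_fix /coord => ->.
  by case: ifP; rewrite ?rpred0 ?rpred1.
have shift_fixed k : sat_fix (fx k) (affine_image 1 (if bx then (1, 0) else (0, 1)) z).
  move: (fixed k) (no_fix k); rewrite /sat_fix /affine_image.
  by case: (fx_isx (fx k)); case: (bx) => //= -> _; rewrite mul1r addr0.
move: (affine_image_fixed shift_fixed 0) => /(congr1 (coord bx)).
by rewrite /affine_image /coord; case: (bx) => /=; lra.
Qed.

Lemma coord_unit_gap :
  triangle_nondeg z -> exists i j bx, coord bx (z j) - coord bx (z i) = 1.
Proof.
move=> tri.
have [[k1 k2] /and3P[/eqP same_coord one1 zero2] | no_gap] := pickP (fun kk : 'I_3 * 'I_3 =>
    [&& fx_isx (fx kk.1) == fx_isx (fx kk.2), fx_one (fx kk.1) & ~~ fx_one (fx kk.2)]).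
  exists (fx_piece (fx k2)), (fx_piece (fx k1)), (fx_isx (fx k1)).
  move: (fixed k1) (fixed k2); rewrite /sat_fix /coord same_coord one1 (negbTE zero2).
  by case: (fx_isx (fx k2)) => -> ->; rewrite subr0.
(* Otherwise the fixations on each axis agree, and the homothety of ratio 2 centred at
   their common values preserves every equation, so it would fix z. *)
pose center bx : R := if [exists k, (fx_isx (fx k) == bx) && fx_one (fx k)] then 1 else 0.
have fix_center k : (if fx_one (fx k) then 1 else 0) = center (fx_isx (fx k)).
  rewrite /center; case: existsP => [[l /andP[/eqP same one_l]] | no_one].
    case: ifP => // /negbT zero_k.
    by have := no_gap (l, k); rewrite /= same eqxx one_l zero_k.
  by case: ifP => // one_k; case: no_one; exists k; rewrite eqxx.
have z_center i : z i = (center true, center false).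
  have homothety_fixed k : sat_fix (fx k) (affine_image 2 (- center true, - center false) z).
    move: (fixed k); rewrite /sat_fix /affine_image fix_center.
    by case: (fx_isx (fx k)) => /= ->; ring.
  move: (affine_image_fixed homothety_fixed i); rewrite /affine_image => zi.
  rewrite [z i]surjective_pairing; have := congr1 fst zi; have := congr1 snd zi.
  by rewrite /= => ey ex; congr pair; lra.
by move: tri; rewrite /triangle_nondeg !z_center /= !subrr eqxx.
Qed.

End Fixations.

Section LeastCommonDenominator.

Variables (R : realType) (z : config R) (lam : R) (g : 'I_3 -> int * int).
Variable tail : 'I_3 -> 'I_3.
Hypothesis tail_inj : injective tail.
Hypothesis edge_diff : forall k bx,
  coord bx (z (ordS (tail k))) - coord bx (z (tail k)) = lam * (coord bx (g k))%:~R.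
Hypothesis cube : in_unit_cube z.
Hypothesis unit_gap : exists i j bx, coord bx (z j) - coord bx (z i) = 1.
Hypothesis anchor : forall bx, exists i, coord bx (z i) \is a Num.int.
(* The coordinates of the g k are coprime. *)
Hypothesis primitive : forall q : R,
  (forall k bx, q * (coord bx (g k))%:~R \is a Num.int) -> q \is a Num.int.

Let N := (\max_(k < 3) maxn (absz (g k).1) (absz (g k).2))%N.

Lemma coord_diff_le1 i j bx : `|coord bx (z j) - coord bx (z i)| <= 1.
Proof.
have [/andP[xi0 xi1] /andP[yi0 yi1]] := cube i.
have [/andP[xj0 xj1] /andP[yj0 yj1]] := cube j.
by rewrite ler_norml /coord; case: (bx); apply/andP; split; lra.
Qed.

Lemma pair_diff i j : exists k (e : int), `|e| <= 1 /\
  forall bx, coord bx (z j) - coord bx (z i) = lam * (e * coord bx (g k))%:~R.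
Proof.
have tailK := f_finv tail_inj.
have [<- | /ordS3_adj[-> | ->]] := eqVneq i j.
- by exists 0, 0; split=> [|bx]; rewrite ?normr0 // subrr mul0r mulr0.
- exists (finv tail i), 1; split=> // bx.
  by rewrite mul1r -edge_diff tailK.
- exists (finv tail j), (-1); split=> [|bx]; first by rewrite normrN normr1.
  by rewrite mulN1r intrN mulrN -edge_diff tailK opprB.
Qed.

Lemma norm_edge_le1 k bx : `|lam| * (absz (coord bx (g k)))%:R <= 1.
Proof. by rewrite natr_absz intr_norm -normrM -edge_diff coord_diff_le1. Qed.

Lemma norm_lam_mul_N : `|lam| * N%:R = 1.
Proof.
have [i [j [bx gap]]] := unit_gap.
have [k [e [e_le1 diff]]] := pair_diff i j.
set W := absz (coord bx (g k)).
have W_ge1 : 1 <= `|lam| * W%:R.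
  apply: (@le_trans _ _ `|coord bx (z j) - coord bx (z i)|); first by rewrite gap normr1.
  rewrite diff intrM !normrM ler_wpM2l // natr_absz intr_norm ler_piMl //.
  by rewrite -intr_norm lerz1.
have lam_gt0 : 0 < `|lam|.
  by rewrite normr_gt0; apply: contraTneq W_ge1 => ->; rewrite normr0 mul0r ler10.
have N_le_W : (N <= W)%N.
  apply/bigmax_leqP => l _; rewrite geq_max; apply/andP.
  by split; rewrite -(ler_nat R) -(ler_pM2l lam_gt0);
    [exact: le_trans (norm_edge_le1 l true) W_ge1 | exact: le_trans (norm_edge_le1 l false) W_ge1].
have W_le_N : (W <= N)%N.
  apply: leq_trans _ (leq_bigmax k); rewrite /W /coord.
  by case: (bx); [exact: leq_maxl | exact: leq_maxr].
have -> : N = W by apply/eqP; rewrite eqn_leq N_le_W W_le_N.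
by apply/le_anti; rewrite W_ge1 norm_edge_le1.
Qed.

Lemma N_gt0 : (0 < N)%N.
Proof.
rewrite lt0n; apply/eqP => N0; have := norm_lam_mul_N.
by rewrite N0 mulr0 => /eqP; rewrite eq_sym oner_eq0.
Qed.

Lemma N_mul_lam : N%:R * lam = Num.sg lam.
Proof. by rewrite [in LHS](numEsg lam) mulrCA [N%:R * _]mulrC norm_lam_mul_N mulr1. Qed.

Lemma N_clears_denoms : clears_denoms z N.
Proof.
suff N_coord l bx : N%:R * coord bx (z l) \is a Num.int.
  by move=> l; split; [exact: (N_coord l true) | exact: (N_coord l false)].
have [i anchor_i] := anchor bx; have [k [e [_ diff]]] := pair_diff i l.
rewrite -(subrK (coord bx (z i)) (coord bx (z l))) diff mulrDr mulrA N_mul_lam.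
apply: rpredD; last exact: rpredM (natr_int _ _) anchor_i.
by rewrite sgrEz -intrM intr_int.
Qed.

Lemma N_le_clearing M : (0 < M)%N -> clears_denoms z M -> (N <= M)%N.
Proof.
move=> M_gt0 M_clears.
have M_coord l bx : M%:R * coord bx (z l) \is a Num.int by have [] := M_clears l; case: (bx).
have N_neq0 : N%:R != 0 :> R by rewrite pnatr_eq0 -lt0n N_gt0.
have lam_inv : `|lam| = N%:R^-1.
  by apply: (mulIf N_neq0); rewrite norm_lam_mul_N mulVf.
pose q : R := M%:R / N%:R.
have q_int : q \is a Num.int.
  apply: primitive => k bx.
  have M_edge : M%:R * (lam * (coord bx (g k))%:~R) \is a Num.int.
    by rewrite -edge_diff mulrBr rpredB.
  have -> : q * (coord bx (g k))%:~R = Num.sg lam * (M%:R * (lam * (coord bx (g k))%:~R)).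
    by rewrite /q [RHS]mulrCA (mulrA (Num.sg lam)) -normrEsg lam_inv mulrA.
  by rewrite rpredM // sgrEz intr_int.
have q_gt0 : 0 < q by rewrite divr_gt0 ?ltr0n ?N_gt0.
have q_ge1 : 1 <= q by have := norm_intr_ge1 q_int (lt0r_neq0 q_gt0); rewrite gtr0_norm.
by move: q_ge1; rewrite /q ler_pdivlMr ?ltr0n ?N_gt0 // mul1r ler_nat.
Qed.

Lemma is_lcd_max_edge_coord : is_lcd z N.
Proof. by split; [exact: N_gt0 | split; [exact: N_clears_denoms | exact: N_le_clearing]]. Qed.

End LeastCommonDenominator.

Lemma is_vertex_of_unique_solution (R : realType) (P : seq move) (I J : finType)
    (e : I -> move_eq) (f : J -> fixation) (z : config R) :
  in_unit_cube z -> (forall i, me_move (e i) \in P /\ me_i (e i) != me_j (e i)) ->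
  (forall i, sat_move_eq (e i) z) -> (forall j, sat_fix (f j) z) ->
  (forall z', (forall i, sat_move_eq (e i) z') -> (forall j, sat_fix (f j) z') ->
     forall l, z' l = z l) ->
  is_vertex P z.
Proof.
move=> cube eP ez fz unique; split=> //.
exists [seq e i | i <- enum I], [seq f j | j <- enum J].
split=> [_ /mapP[i _ ->] // | z'].
split=> [[ez' fz'] | z'z].
  by apply: unique => [i | j]; [apply: ez' | apply: fz']; apply: map_f; rewrite mem_enum.
split=> _ /mapP[i _ ->].
  by rewrite /sat_move_eq /on_move_hyp !z'z; exact: ez.
by rewrite /sat_fix !z'z; exact: fz.
Qed.

Theorem proposition5p1 (R : realType) (P : seq move)
  (m : 'I_3 -> move) (w : 'I_3 -> int)
  (a b : 'I_3 -> 'I_3) (fx : 'I_3 -> fixation) (z : config R) :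
  rider P ->
  (forall k, m k \in P) ->
  (forall k l, k != l -> m k != m l) ->
  (forall k, w k != 0) ->
  gcdz (gcdz (w 0) (w 1)) (w 2) = 1 ->
  \sum_(k < 3) w k * (m k).1 = 0 ->
  \sum_(k < 3) w k * (m k).2 = 0 ->
  in_unit_cube z ->
  triangle_nondeg z ->
  (* pair {a k, b k} of pieces attacks along move m k; the three pairs are distinct *)
  (forall k, a k != b k) ->
  (forall k l, k != l -> [set a k; b k] != [set a l; b l]) ->
  (forall k, on_move_hyp (m k) (a k) (b k) z) ->
  (* the three move equations and three fixations have z as unique common solution *)
  (forall z' : config R,
      (forall k, on_move_hyp (m k) (a k) (b k) z') ->
      (forall k, sat_fix (fx k) z') ->
      forall i, z' i = z i) ->
  (forall k, sat_fix (fx k) z) ->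
  is_vertex P z /\
  is_lcd z (\max_(k < 3) maxn (absz (w k * (m k).1)%R) (absz (w k * (m k).2)%R))%N.
Proof.
move=> [_ [P_prim P_indep]] mP m_neq w_neq0 w_prim sum1 sum2 cube tri ab_neq edges_distinct
  on_moves unique fixed.
split.
  apply: (is_vertex_of_unique_solution (e := fun k => (m k, a k, b k)) (f := fx)) => // k.
  by split; [exact: mP | exact: ab_neq].
have tail_inj := edge_tail_inj ab_neq edges_distinct.
have w_rel bx : \sum_k w k * coord bx (m k) = 0 by case: bx.
have [lam edge_diff] := cycle_edges_proportional tail_inj
  (fun k => (P_prim _ (mP k)).1) (P_indep _ _ (mP 1) (mP 2) (m_neq 1 2 isT)) (w_neq0 0) w_rel
  (fun k => on_move_hyp_tail ab_neq (on_moves k)).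
apply: (is_lcd_max_edge_coord (g := fun k => (w k * (m k).1, w k * (m k).2)) tail_inj).
- by move=> k; case; rewrite edge_diff.
- exact: cube.
- exact: coord_unit_gap on_moves fixed unique tri.
- exact: coord_anchor on_moves fixed unique.
- move=> q q_int; apply: (int_of_primitive (fun k => (P_prim _ (mP k)).2) w_prim) => k.
  by case; [exact: q_int k true | exact: q_int k false].
Qed.
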